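(* Let $S_{r,N}$ be an atomic exponential Puiseux semiring. The following are equivalent: (1) $r\in\mathbb{N}$; (2) $S_{r,N}$ is locally tame; (3) $S_{r,N}$ is globally tame.
   Context: $\mathbb{N}=\{0,1,2,\dots\}$. A numerical monoid $N$ is an additive submonoid of $\mathbb{N}$ with finite complement. For $r\in\mathbb{Q}_{>0}$, $S_{r,N}$ is the additive submonoid of $\mathbb{Q}_{\ge0}$ generated by $\{r^k:k\in N\}$. For an atomic monoid $M$ with factorization sets $\mathsf{Z}(y)$ and factorization monoid $\mathsf{Z}(M)$ (free commutative monoid on the atoms), with $\mathsf{d}(z,z')=\max(|z|,|z'|)-|\gcd(z,z')|$: for an atom $a$, the tame degree $\mathsf{t}(a)$ is the smallest $n\in\mathbb{N}\cup\{\infty\}$ such that for every $y\in M$ with $\mathsf{Z}(y)\cap(a+\mathsf{Z}(M))\neq\emptyset$ and every $z\in\mathsf{Z}(y)$ there exists $z'\in\mathsf{Z}(y)\cap(a+\mathsf{Z}(M))$ (a factorization containing $a$) with $\mathsf{d}(z,z')\le n$; $\mathsf{t}(M)=\sup_a\mathsf{t}(a)$. $M$ is locally tame if $\mathsf{t}(a)<\infty$ for every atom $a$, and globally tame if $\mathsf{t}(M)<\infty$. *)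

From mathcomp Require Import all_boot all_order all_algebra.
Set Implicit Arguments. Unset Strict Implicit. Unset Printing Implicit Defensive.
Import Order.TTheory GRing.Theory Num.Theory.
Local Open Scope ring_scope.

Definition numerical_monoid (N : pred nat) : Prop :=
  [/\ (0%N \in N),
      (forall m n : nat, m \in N -> n \in N -> (m + n)%N \in N) &
      (exists b : nat, forall n : nat, (b <= n)%N -> n \in N)].

Definition exp_puiseux (r : rat) (N : pred nat) : rat -> Prop :=
  fun x => exists s : seq nat, all (fun k => k \in N) s /\ x = \sum_(k <- s) r ^+ k.

(* Atoms of a (reduced) submonoid M of Q_{>=0}: the only unit is 0. *)
Definition is_atom (M : rat -> Prop) (a : rat) : Prop :=
  [/\ M a, a != 0 &
      forall b c, M b -> M c -> a = b + c -> b = 0 \/ c = 0].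

(* A factorization (element of the free commutative monoid on the atoms,
   represented as a finite list up to order) of y. *)
Definition is_factorization (M : rat -> Prop) (y : rat) (z : seq rat) : Prop :=
  (forall a, a \in z -> is_atom M a) /\ \sum_(a <- z) a = y.

Definition atomic (M : rat -> Prop) : Prop :=
  forall y, M y -> y != 0 -> exists z, is_factorization M y z.

Definition gcd_len (z z' : seq rat) : nat :=
  (\sum_(a <- undup z) minn (count_mem a z) (count_mem a z'))%N.

Definition fact_dist (z z' : seq rat) : nat :=
  (maxn (size z) (size z') - gcd_len z z')%N.

Definition tame_bound (M : rat -> Prop) (a : rat) (n : nat) : Prop :=
  forall y z, is_factorization M y z ->
    (exists z', is_factorization M y z' /\ a \in z') ->
    exists z', [/\ is_factorization M y z', a \in z' & (fact_dist z z' <= n)%N].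

Definition locally_tame (M : rat -> Prop) : Prop :=
  forall a, is_atom M a -> exists n : nat, tame_bound M a n.

Definition globally_tame (M : rat -> Prop) : Prop :=
  exists n : nat, forall a, is_atom M a -> tame_bound M a n.

(* Write r = p/q in lowest terms.
   - If q = 1, every element of S_{r,N} is a natural number, 1 is the only
     atom and factorizations are unique: S_{r,N} is globally tame.
   - If p = 1 < q, no power of r is an atom, so S_{r,N} is not atomic.
   - If p, q >= 2, every r^k with k in N is an atom (clearing denominators,
     r^k cannot be a sum of smaller powers), and the atom r^c at the
     conductor c of N has infinite tame degree.  For r < 1, the element
     q^j r^(c+j) = p^j r^c shows this by a size comparison plus Bernoulli's
     inequality.  For r > 1, the element q r^(c+n+1) needs a p-adic carrying
     argument on the cleared sums (section TruncatedSums): every factorization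
     containing r^c has at least p + n (p - q) atoms. *)

From mathcomp Require Import all_boot all_order all_algebra zify ring lra.
Set Implicit Arguments. Unset Strict Implicit. Unset Printing Implicit Defensive.
Import Order.TTheory GRing.Theory Num.Theory.

(* For a list E of exponents, trunc_sum k = q^k * sum_{e in E, e <= k} r^e
   with r = p/q: the part of the sum at levels <= k, cleared of denominators.
   count_le k counts the exponents at levels <= k. *)
Section TruncatedSums.
Variables (p q : nat) (E : seq nat).

Definition trunc_sum (k : nat) : nat := \sum_(e <- E | e <= k) p ^ e * q ^ (k - e).

Definition count_le (k : nat) : nat := count (fun e => e <= k) E.

Lemma trunc_sumS k :
  trunc_sum k.+1 = q * trunc_sum k + p ^ k.+1 * count_mem k.+1 E.
Proof.
rewrite /trunc_sum; elim: E => [|e E' IH]; first by rewrite !big_nil /=; lia.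
rewrite !big_cons IH /=; case: (ltngtP e k.+1) => [lt_ek|gt_ek|->].
- rewrite -ltnS lt_ek subSn // expnS add0n; ring.
- by rewrite leqNgt (ltnW gt_ek).
- by rewrite ltnn subnn add1n mulnS; ring.
Qed.

Lemma count_leS k : count_le k.+1 = count_le k + count_mem k.+1 E.
Proof.
rewrite /count_le; elim: E => [|e E' IH] //=; rewrite IH.
case: (ltngtP e k.+1) => [lt_ek|gt_ek|->] /=.
- by rewrite -ltnS lt_ek add0n addnA.
- by rewrite leqNgt (ltnW gt_ek).
- by rewrite ltnn add0n addnCA.
Qed.

(* Each summand p^e q^(k-e) with e <= k is at most p^k when q <= p. *)
Lemma trunc_sum_le_count k : q <= p -> trunc_sum k <= count_le k * p ^ k.
Proof.
move=> le_qp; rewrite /count_le /trunc_sum mulnC -iter_addn_0 -big_const_seq.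
apply: leq_sum => e le_ek; rewrite -{2}(subnKC le_ek) expnD leq_mul2l.
apply/orP; right; case: (k - e) => [|d] //; by rewrite leq_exp2r.
Qed.

Lemma trunc_sum_gt0 (b k : nat) :
  0 < p -> 0 < q -> b \in E -> b <= k -> 0 < trunc_sum k.
Proof.
move=> p_gt0 q_gt0 bE le_bk; rewrite lt0n sum_nat_seq_neq0; apply/hasP.
by exists b; rewrite //= le_bk -lt0n muln_gt0 !expn_gt0 p_gt0 q_gt0.
Qed.

(* If p^(k+1) divides the full cleared sum, it divides its part at exponents
   <= k: the other summands are multiples of p^(k+1), and q is prime to p. *)
Lemma trunc_sum_dvd K k : coprime p q -> k <= K ->
  p ^ k.+1 %| \sum_(e <- E) p ^ e * q ^ (K - e) -> p ^ k.+1 %| trunc_sum k.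
Proof.
move=> cop_pq le_kK; rewrite (bigID (fun e => e <= k)) /=.
have -> : \sum_(e <- E | e <= k) p ^ e * q ^ (K - e) = q ^ (K - k) * trunc_sum k.
  rewrite /trunc_sum big_distrr /=; apply: eq_bigr => e le_ek.
  by rewrite mulnCA -expnD; congr (_ * q ^ _); lia.
have high : p ^ k.+1 %| \sum_(e <- E | ~~ (e <= k)) p ^ e * q ^ (K - e).
  by apply: dvdn_sum => e; rewrite -ltnNge => lt_ke; rewrite dvdn_mulr // dvdn_exp2l.
by rewrite (dvdn_addl _ high) Gauss_dvdr // coprimeXl // coprimeXr.
Qed.

(* The carrying invariant: when each truncated sum T(b + l), l < i, is at
   least p^(b+l+1), passing from level b to level b + i gains i (p - q) atoms
   over the normalized mass p T(k) / p^(k+1). *)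
Lemma count_le_potential b i : q <= p ->
  (forall l, l < i -> p ^ (b + l).+1 <= trunc_sum (b + l)) ->
  p * trunc_sum (b + i) + i * (p - q) * p ^ (b + i).+1
    <= p ^ (b + i).+1 * count_le (b + i).
Proof.
move=> le_qp; elim: i => [|i IH] big_T.
  by rewrite !mul0n addn0 addn0 expnS -mulnA leq_mul2l mulnC trunc_sum_le_count ?orbT.
have pot := IH (fun l lt_li => big_T l (leqW lt_li)).
have ge_T := big_T i (ltnSn i).
rewrite addnS trunc_sumS count_leS (expnS p (b + i).+1).
move: pot ge_T; set T := trunc_sum _; set P := p ^ _; set C := count_le _.
move: (p - q) (subnKC le_qp) => d def_p pot ge_T.
clearbody T P C; rewrite -def_p in pot *.
have le_dP : d * P <= d * T by rewrite leq_mul2l ge_T orbT.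
nia.
Qed.

Lemma many_exponents (K b k : nat) : coprime p q -> 0 < q < p -> b \in E ->
  b <= k -> k <= K -> p ^ k.+1 %| \sum_(e <- E) p ^ e * q ^ (K - e) ->
  p + (k - b) * (p - q) <= size E.
Proof.
move=> cop_pq /andP[q_gt0 lt_qp] bE le_bk le_kK dvd_full.
have p_gt0 : 0 < p := ltn_trans q_gt0 lt_qp.
have big_T l : b + l <= k -> p ^ (b + l).+1 <= trunc_sum (b + l).
  move=> le_lk; apply: dvdn_leq; first exact: trunc_sum_gt0 bE (leq_addr _ _).
  apply: trunc_sum_dvd cop_pq (leq_trans le_lk le_kK) _.
  by apply: dvdn_trans _ dvd_full; apply: dvdn_exp2l; rewrite ltnS.
have levels l : l < k - b -> p ^ (b + l).+1 <= trunc_sum (b + l).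
  by move=> lt_l; apply: big_T; lia.
have := count_le_potential (ltnW lt_qp) levels; rewrite subnKC // => pot.
have ge_T := big_T (k - b); rewrite subnKC // in ge_T.
have le_C : count_le k <= size E := count_size _ _.
have P_gt0 : 0 < p ^ k.+1 by rewrite expn_gt0 p_gt0.
rewrite -(leq_pmul2l P_gt0).
move: pot (ge_T (leqnn k)) le_C; set P := p ^ k.+1; set T := trunc_sum k.
nia.
Qed.

End TruncatedSums.

Local Open Scope ring_scope.

Section ListSums.
Variable R : numDomainType.

Lemma sum_nseq (L : nat) (x : R) : \sum_(u <- nseq L x) u = L%:R * x.
Proof. by rewrite big_nseq iter_addr_0 mulr_natl. Qed.

Lemma elem_le_sum (s : seq R) a :
  (forall u, u \in s -> 0 <= u) -> a \in s -> a <= \sum_(u <- s) u.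
Proof.
elim: s => [|u s IH] // s_ge0; rewrite inE big_cons => /orP[/eqP->|a_in].
  rewrite lerDl big_seq; apply: sumr_ge0 => v v_in.
  by apply: s_ge0; rewrite inE v_in orbT.
apply: le_trans (IH _ a_in) _ => [v v_in|]; first by apply: s_ge0; rewrite inE v_in orbT.
by rewrite lerDr s_ge0 ?mem_head.
Qed.

Lemma count_add_le_sum (s : seq R) (x a : R) :
  (forall u, u \in s -> 0 <= u) -> a \in s -> a != x ->
  (count_mem x s)%:R * x + a <= \sum_(u <- s) u.
Proof.
move=> s_ge0 a_in ax; rewrite (bigID (pred1 x)) /= (eq_bigr (fun=> x)) => [|u /eqP //].
rewrite big_const_seq iter_addr_0 mulr_natl lerD2l -big_filter.
by apply: elem_le_sum => [u|]; rewrite mem_filter ?ax // => /andP[_ /s_ge0].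
Qed.
End ListSums.

Lemma gcd_len_nseq (L : nat) (x : rat) (z : seq rat) :
  gcd_len (nseq L x) z = minn L (count_mem x z).
Proof.
rewrite /gcd_len; case: L => [|L]; first by rewrite big_nil min0n.
have -> : undup (nseq L.+1 x) = [:: x].
  by elim: L => [|L] //=; rewrite inE eqxx /= => ->.
by rewrite big_seq1 count_nseq /= eqxx mul1n.
Qed.

Lemma fact_dist_nseq (L : nat) (x : rat) (z : seq rat) :
  fact_dist (nseq L x) z = (maxn L (size z) - minn L (count_mem x z))%N.
Proof. by rewrite /fact_dist gcd_len_nseq size_nseq. Qed.

Lemma ratio_le_fact_dist (L : nat) (x a : rat) (z : seq rat) :
  0 < x -> (forall u, u \in z -> 0 <= u) -> a \in z -> a != x ->
  \sum_(u <- z) u = L%:R * x -> a / x <= (fact_dist (nseq L x) z)%:R.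
Proof.
move=> x_gt0 z_ge0 a_in ax sum_z.
have := count_add_le_sum z_ge0 a_in ax; rewrite sum_z fact_dist_nseq.
set c := count_mem x z => le_sum.
have le_cL : (c <= L)%N.
  rewrite -(ler_nat rat) -(ler_pM2r x_gt0); apply: le_trans le_sum.
  by rewrite lerDl z_ge0.
apply: (@le_trans _ _ (L - c)%N%:R).
  by rewrite ler_pdivrMr // natrB // mulrBl; lra.
by rewrite ler_nat (minn_idPr le_cL) leq_sub2r // leq_maxl.
Qed.

Lemma size_sub_le_fact_dist (L : nat) (x : rat) (z : seq rat) :
  (size z - L <= fact_dist (nseq L x) z)%N.
Proof. by rewrite fact_dist_nseq; lia. Qed.

Section Factorizations.
Variable M : rat -> Prop.

Lemma nseq_factorization (L : nat) a :
  is_atom M a -> is_factorization M (L%:R * a) (nseq L a).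
Proof. by move=> atom_a; split; [move=> u /nseqP[-> _] | rewrite sum_nseq]. Qed.

Lemma cat_factorization y y' z z' : is_factorization M y z ->
  is_factorization M y' z' -> is_factorization M (y + y') (z ++ z').
Proof.
move=> [z_at <-] [z'_at <-]; split; last by rewrite big_cat.
by move=> a; rewrite mem_cat => /orP[/z_at|/z'_at].
Qed.

End Factorizations.

Section PuiseuxAtoms.
Variables (r : rat) (N : pred nat).
Hypothesis r_gt0 : 0 < r.
Local Notation S := (exp_puiseux r N).

Lemma pow_sum_gt0 (s : seq nat) : s != [::] -> 0 < \sum_(e <- s) r ^+ e.
Proof.
case: s => [|e s] // _; rewrite big_cons ltr_pwDl ?exprn_gt0 // big_seq.
by apply: sumr_ge0 => u _; rewrite ltW ?exprn_gt0.
Qed.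

(* Every atom of S_{r,N} is a generator r^k, k in N: a longer sum of powers
   splits into two nonzero elements of S_{r,N}. *)
Lemma atom_is_pow a : is_atom S a -> exists2 k, k \in N & a = r ^+ k.
Proof.
move=> [[[|k s] [/= s_N ->]] a_neq0 a_split]; first by rewrite big_nil eqxx in a_neq0.
move: s_N => /andP[k_N s_N]; exists k => //.
case: s s_N a_neq0 a_split => [|e s] s_N _ a_split; first by rewrite big_seq1.
have [||| pow0 | sum0] := a_split (r ^+ k) (\sum_(e <- e :: s) r ^+ e).
- by exists [:: k]; rewrite big_seq1 /= k_N.
- by exists (e :: s).
- by rewrite big_cons.
- by move: (exprn_gt0 k r_gt0); rewrite pow0 ltxx.
- by move: (@pow_sum_gt0 (e :: s) isT); rewrite sum0 ltxx.
Qed.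

Lemma atom_gt0 a : is_atom S a -> 0 < a.
Proof. by case/atom_is_pow => k _ ->; rewrite exprn_gt0. Qed.

Lemma factorization_pows (z : seq rat) :
  (forall a, a \in z -> is_atom S a) -> exists E : seq nat, z = map (GRing.exp r) E.
Proof.
elim: z => [|a z IH] z_at; first by exists [::].
have [k _ ->] := atom_is_pow (z_at a (mem_head _ _)).
have [E ->] := IH (fun b b_in => z_at b (mem_behead (s := a :: z) b_in)).
by exists (k :: E).
Qed.

End PuiseuxAtoms.

Lemma exps_le_bound (E : seq nat) (m : nat) :
  all (fun e => e <= m + \max_(x <- E) x)%N E.
Proof.
by apply/allP => e e_in; apply: leq_trans (leq_addl m _); apply: leq_bigmax_seq.
Qed.

Section FractionalBase.
Variables p q : nat.
Hypothesis q_gt0 : (0 < q)%N.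
Local Notation r := (p%:R / q%:R : rat).

Lemma scaled_pow (e K : nat) : (e <= K)%N ->
  r ^+ e * (q ^ K)%:R = (p ^ e * q ^ (K - e))%:R.
Proof.
move=> le_eK; have q_neq0 : (q%:R : rat) != 0 by rewrite pnatr_eq0 -lt0n.
rewrite expr_div_n natrX -{1}(subnKC le_eK) exprD mulrA divfK ?expf_neq0 //.
by rewrite natrM !natrX.
Qed.

Lemma scaled_pow_sum (E : seq nat) (K : nat) : all (fun e => e <= K)%N E ->
  (\sum_(e <- E) r ^+ e) * (q ^ K)%:R = (\sum_(e <- E) p ^ e * q ^ (K - e))%N%:R.
Proof.
elim: E => [|e E IH] /=; first by rewrite !big_nil mul0r.
by case/andP => le_eK E_le; rewrite !big_cons mulrDl natrD scaled_pow // IH.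
Qed.

Hypotheses (cop_pq : coprime p q) (p_gt1 : (1 < p)%N) (q_gt1 : (1 < q)%N).

Lemma ratio_gt0 : 0 < r.
Proof. by rewrite divr_gt0 // ltr0n ltnW. Qed.

(* Clearing denominators,
   this would make p divide a power of q when r < 1 (all exponents exceed k),
   and q divide p^k when r > 1 (all exponents are below k). *)
Lemma pow_neq_sum_smaller (k : nat) (E : seq nat) :
  (forall e, e \in E -> r ^+ e < r ^+ k) -> \sum_(e <- E) r ^+ e != r ^+ k.
Proof.
move=> E_lt; apply/eqP => sum_E.
have coprime_dvd1 m n : coprime m n -> (m %| n)%N -> m = 1%N.
  by move=> cop_mn /gcdn_idPl; rewrite (eqP cop_mn).
case: (ltngtP p q) => [lt_pq | lt_qp | eq_pq].
- have r_lt1 : r < 1 by rewrite ltr_pdivrMr ?ltr0n // mul1r ltr_nat.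
  have E_gt e : e \in E -> (k < e)%N by move/E_lt; rewrite ltr_iXn2l // ratio_gt0.
  set K := (k + \max_(x <- E) x)%N.
  have /eqP := congr1 (fun x => x * (q ^ K)%:R) sum_E.
  rewrite /= scaled_pow_sum ?exps_le_bound // scaled_pow ?leq_addr // eqr_nat => /eqP sum_nat.
  have : (p ^ k.+1 %| p ^ k * q ^ (K - k))%N.
    rewrite -sum_nat big_seq; apply: dvdn_sum => e e_in.
    by rewrite dvdn_mulr // dvdn_exp2l // E_gt.
  rewrite expnS mulnC dvdn_pmul2l ?expn_gt0 ?(ltnW p_gt1) // => /(coprime_dvd1 _ _).
  by rewrite coprimeXr // => /(_ isT) p1; move: p_gt1; rewrite p1.
- have r_gt1 : 1 < r by rewrite ltr_pdivlMr ?ltr0n // mul1r ltr_nat.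
  have E_lt' e : e \in E -> (e < k)%N by move/E_lt; rewrite ltr_eXn2l.
  have /eqP := congr1 (fun x => x * (q ^ k)%:R) sum_E.
  rewrite /= scaled_pow_sum; last by apply/allP => e /E_lt' /ltnW.
  rewrite scaled_pow // subnn muln1 eqr_nat => /eqP sum_nat.
  have : (q %| p ^ k)%N.
    rewrite -sum_nat big_seq; apply: dvdn_sum => e e_in.
    by rewrite dvdn_mull // dvdn_exp // subn_gt0 E_lt'.
  move=> /(coprime_dvd1 _ _); rewrite coprimeXr 1?coprime_sym // => /(_ isT) q1.
  by move: q_gt1; rewrite q1.
- by move: cop_pq; rewrite eq_pq /coprime gcdnn => /eqP q1; move: q_gt1; rewrite q1.
Qed.

(* Hence every generator r^k, k in N, is an atom of S_{r,N}: in a splitting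
   into two nonzero elements, every power involved is smaller than r^k. *)
Lemma pow_is_atom (N : pred nat) (k : nat) :
  k \in N -> is_atom (exp_puiseux r N) (r ^+ k).
Proof.
move=> k_N; split; first by exists [:: k]; rewrite big_seq1 /= k_N.
  by rewrite gt_eqF // exprn_gt0 // ratio_gt0.
move=> _ _ [s1 [_ ->]] [s2 [_ ->]] sum_k.
case: (s1 =P [::]) => [->|/eqP s1_nil]; first by left; rewrite big_nil.
case: (s2 =P [::]) => [->|/eqP s2_nil]; first by right; rewrite big_nil.
have pow_le e (s : seq nat) : e \in s -> r ^+ e <= \sum_(x <- s) r ^+ x.
  move=> e_in; rewrite -(big_map (GRing.exp r) xpredT id).
  apply: elem_le_sum; last exact: map_f.
  by move=> u /mapP[x _ ->]; rewrite ltW // exprn_gt0 // ratio_gt0.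
have smaller e : e \in s1 ++ s2 -> r ^+ e < r ^+ k.
  rewrite sum_k mem_cat => /orP[e_in|e_in]; apply: le_lt_trans (pow_le _ _ e_in) _.
    by rewrite ltrDl pow_sum_gt0 // ratio_gt0.
  by rewrite ltrDr pow_sum_gt0 // ratio_gt0.
by move: (pow_neq_sum_smaller smaller); rewrite big_cat /= -sum_k eqxx.
Qed.

End FractionalBase.

Lemma bernoulli (R : realDomainType) (x : R) (n : nat) :
  0 <= x -> 1 + n%:R * x <= (1 + x) ^+ n.
Proof.
move=> x_ge0; elim: n => [|n IH]; first by rewrite mul0r addr0.
rewrite exprS; apply: le_trans (ler_wpM2l (addr_ge0 ler01 x_ge0) IH).
have : 0 <= n%:R * (x * x) by rewrite mulr_ge0 ?mulr_ge0.
rewrite -natr1; lra.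
Qed.

Section FractionalNotTame.
Variables (p q : nat) (N : pred nat) (b : nat).
Hypotheses (cop_pq : coprime p q) (p_gt1 : (1 < p)%N) (q_gt1 : (1 < q)%N).
Hypothesis conductor : forall k, (b <= k)%N -> k \in N.
Local Notation r := (p%:R / q%:R : rat).
Local Notation S := (exp_puiseux r N).

Let q_gt0 : (0 < q)%N. Proof. exact: ltnW. Qed.
Let r_gt0 : 0 < r. Proof. exact: ratio_gt0. Qed.

Lemma high_pow_is_atom (k : nat) : (b <= k)%N -> is_atom S (r ^+ k).
Proof. by move=> le_bk; apply: pow_is_atom => //; apply: conductor. Qed.

(* When r < 1: y = q^j r^(b+j) = p^j r^b.  A factorization of y containing
   r^b lacks at least (q/p)^j of the q^j copies of r^(b+j), and Bernoulli's
   inequality makes (q/p)^j > n for j = p (n + 1). *)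
Lemma not_tame_lt1 (n : nat) : (p < q)%N -> ~ tame_bound S (r ^+ b) n.
Proof.
move=> lt_pq tame; set j := (p * n.+1)%N; set x := r ^+ (b + j).
have r_neq1 : r != 1 by rewrite lt_eqF // ltr_pdivrMr ?ltr0n // mul1r ltr_nat.
have p_neq0 : (p%:R : rat) != 0 by rewrite pnatr_eq0 -lt0n ltnW.
have ratio : r ^+ b / x = (1 + (q - p)%N%:R / p%:R) ^+ j.
  rewrite /x exprD invfM mulrA divff ?mul1r ?expf_neq0 ?gt_eqF // -exprVn invf_div.
  by congr (_ ^+ _); rewrite natrB ?(ltnW lt_pq) // mulrBl divff // addrC subrK.
have y_eq : (q ^ j)%:R * x = (p ^ j)%:R * r ^+ b.
  have qr : q%:R * r = p%:R by rewrite mulrC divfK // pnatr_eq0 -lt0n.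
  by rewrite /x exprD mulrCA !natrX -exprMn qr mulrC.
have z_fact := nseq_factorization (q ^ j) (high_pow_is_atom (leq_addr j b)).
have z'_fact := nseq_factorization (p ^ j) (high_pow_is_atom (leqnn b)).
rewrite -y_eq in z'_fact.
have b_in : r ^+ b \in nseq (p ^ j) (r ^+ b) by rewrite mem_nseq expn_gt0 (ltnW p_gt1) eqxx.
have [z' [[z'_at z'_sum] b_in' dist]] := tame _ _ z_fact (ex_intro _ _ (conj z'_fact b_in)).
have z'_ge0 u : u \in z' -> 0 <= u by move/z'_at/atom_gt0 => /(_ r_gt0) /ltW.
have b_neq : r ^+ b != x.
  apply/eqP => /(ieexprIn r_gt0 r_neq1) /eqP; rewrite /j; lia.
have := ratio_le_fact_dist (exprn_gt0 _ r_gt0) z'_ge0 b_in' b_neq z'_sum.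
rewrite -/x ratio => /(le_trans (bernoulli _ _)).
have -> : j%:R * ((q - p)%:R / p%:R) = (n.+1 * (q - p))%N%:R :> rat.
  by rewrite /j !natrM; field.
move=> /(_ (divr_ge0 (ler0n _ _) (ler0n _ _))); rewrite addrC natr1 ler_nat.
by move=> /leq_trans /(_ dist); rewrite -subn_gt0 in lt_pq; nia.
Qed.

(* The carry list: q copies of r^b, then p - q copies of r^(b+l) for each
   l < i.  Since (p - q) r^k + q r^k = q r^(k+1), it factors q r^(b+i). *)
Fixpoint carry_list (i : nat) : seq rat :=
  if i is i'.+1 then nseq (p - q) (r ^+ (b + i')) ++ carry_list i'
  else nseq q (r ^+ b).

Lemma carry_list_factorization (i : nat) : (q < p)%N ->
  is_factorization S (q%:R * r ^+ (b + i)) (carry_list i) /\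
  r ^+ b \in carry_list i.
Proof.
move=> lt_qp; elim: i => [|i [IH b_in]] /=.
  rewrite addn0 mem_nseq q_gt0 eqxx; split=> //.
  exact/nseq_factorization/high_pow_is_atom.
split; last by rewrite mem_cat b_in orbT.
have carry : q%:R * r ^+ (b + i.+1) = (p - q)%N%:R * r ^+ (b + i) + q%:R * r ^+ (b + i).
  rewrite -mulrDl -natrD subnK ?(ltnW lt_qp) // addnS exprS mulrA.
  by congr (_ * _); rewrite mulrC divfK // pnatr_eq0 -lt0n.
rewrite carry; apply: cat_factorization IH.
exact/nseq_factorization/high_pow_is_atom/leq_addr.
Qed.

(* When r > 1: y = q r^(b+n+1) has the factorization with q copies of
   r^(b+n+1), while by the counting lemma every factorization of y containing
   r^b has at least p + n (p - q) > q + n atoms. *)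
Lemma not_tame_gt1 (n : nat) : (q < p)%N -> ~ tame_bound S (r ^+ b) n.
Proof.
move=> lt_qp tame; set m := (b + n.+1)%N.
have r_neq1 : r != 1 by rewrite gt_eqF // ltr_pdivlMr ?ltr0n // mul1r ltr_nat.
have [carry_fact b_in] := carry_list_factorization n.+1 lt_qp.
have z_fact := nseq_factorization q (high_pow_is_atom (leq_addr n.+1 b)).
have [z' [[z'_at z'_sum] b_in' dist]] := tame _ _ z_fact (ex_intro _ _ (conj carry_fact b_in)).
have [E def_z'] := factorization_pows r_gt0 z'_at.
have bE : b \in E.
  by move: b_in'; rewrite def_z' => /mapP[e e_in /(ieexprIn r_gt0 r_neq1) ->].
set K := (m + \max_(x <- E) x)%N.
have sum_nat : (\sum_(e <- E) p ^ e * q ^ (K - e) = q * (p ^ m * q ^ (K - m)))%N.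
  apply/eqP; rewrite -(eqr_nat rat) -scaled_pow_sum ?exps_le_bound //.
  rewrite -(big_map (GRing.exp r) xpredT id) -def_z' z'_sum -mulrA.
  by rewrite scaled_pow ?natrM // leq_addr.
have le_kK : (b + n <= K)%N by rewrite /K /m; lia.
have dvd_sum : (p ^ (b + n).+1 %| \sum_(e <- E) p ^ e * q ^ (K - e))%N.
  by rewrite sum_nat -addnS dvdn_mull // dvdn_mulr.
have := many_exponents cop_pq _ bE (leq_addr n b) le_kK dvd_sum.
rewrite q_gt0 lt_qp addKn => /(_ isT) many.
have := leq_trans (size_sub_le_fact_dist _ _ _) dist.
by rewrite def_z' size_map; nia.
Qed.

End FractionalNotTame.

Lemma fractional_not_locally_tame (p q : nat) (N : pred nat) :
  coprime p q -> (1 < p)%N -> (1 < q)%N -> numerical_monoid N ->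
  ~ locally_tame (exp_puiseux (p%:R / q%:R) N).
Proof.
move=> cop_pq p_gt1 q_gt1 [_ _ [c conductor]] local.
have [n tame] := local _ (high_pow_is_atom cop_pq p_gt1 q_gt1 conductor (leqnn c)).
case: (ltngtP p q) => [lt_pq | lt_qp | eq_pq].
- exact: not_tame_lt1 lt_pq tame.
- exact: not_tame_gt1 lt_qp tame.
- by move: cop_pq; rewrite eq_pq /coprime gcdnn => /eqP q1; rewrite q1 in q_gt1.
Qed.

Section IntegerBase.
Variables (t : nat) (N : pred nat).
Hypothesis N0 : 0%N \in N.
Local Notation S := (exp_puiseux t%:R N).

(* Since r^0 = 1, S_{t,N} contains every natural number. *)
Lemma nat_in_S (u : nat) : S u%:R.
Proof.
exists (nseq u 0%N); split; first by apply/allP => e /nseqP[-> _].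
by rewrite big_nseq iter_addr_0 expr0.
Qed.

(* For an integer base, all elements of S_{t,N} are natural numbers, so 1 is
   the only atom. *)
Lemma int_atom_eq1 a : is_atom S a -> a = 1.
Proof.
move=> [[s [_ ->]] sum_neq0 sum_split]; move: sum_neq0 sum_split.
rewrite (eq_bigr (fun e => (t ^ e)%N%:R)) => [|e _]; last by rewrite natrX.
rewrite -natr_sum; case: (\sum_(e <- s) t ^ e)%N => [|[|u]] // _ split.
have [] := split 1 u.+1%:R (nat_in_S 1) (nat_in_S _); first by rewrite -natr1 addrC.
  by move/eqP; rewrite oner_eq0.
by move/eqP; rewrite pnatr_eq0.
Qed.

(* Every factorization is a list of 1's of length y, so factorizations are
   unique and the tame degree is 0. *)
Lemma int_globally_tame : globally_tame S.
Proof.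
have ones z y : is_factorization S y z -> z = nseq (size z) 1 /\ y = (size z)%:R.
  move=> [z_at <-]; have z_ones : z = nseq (size z) 1.
    by apply/all_pred1P/allP => u /z_at /int_atom_eq1 ->.
  by split=> //; rewrite {1}z_ones sum_nseq mulr1.
exists 0%N => a atom_a y z z_fact [z' [z'_fact a_in]].
have [z_ones y_z] := ones _ _ z_fact; have [z'_ones y_z'] := ones _ _ z'_fact.
have eq_z : z = z'.
  by rewrite z_ones z'_ones; congr nseq; apply/eqP; rewrite -(eqr_nat rat) -y_z -y_z'.
exists z; rewrite eq_z; split=> //.
have count_z' : count_mem 1 z' = size z'.
  by rewrite {1}z'_ones count_nseq /= mul1n.
by rewrite {1}z'_ones (fact_dist_nseq (size z') 1 z') count_z' maxnn minnn subnn.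
Qed.

End IntegerBase.

(* For r = 1/q with q >= 2 there are no atoms at all: r^k splits as
   r^e + (q^(c+1) - 1) r^e with e = k + c + 1 past the conductor c.  Since 1
   is a nonzero element of S_{r,N}, S_{r,N} is then not atomic. *)
Lemma unit_fraction_not_atomic (q : nat) (r : rat) (N : pred nat) :
  (1 < q)%N -> q%:R * r = 1 -> numerical_monoid N -> ~ atomic (exp_puiseux r N).
Proof.
move=> q_gt1 qr1 [N0 _ [c conductor]] atomicS.
have q_pos : 0 < q%:R :> rat by rewrite ltr0n ltnW.
have r_gt0 : 0 < r by rewrite -(pmulr_rgt0 _ q_pos) qr1 ltr01.
have one_in : exp_puiseux r N 1 by exists [:: 0%N]; rewrite big_seq1 /= N0.
have [[|a z] [z_at sum_z]] := atomicS 1 one_in (oner_neq0 _).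
  by move: sum_z; rewrite big_nil => /eqP; rewrite eq_sym oner_eq0.
have [k _ def_a] := atom_is_pow r_gt0 (z_at a (mem_head _ _)).
have [_ _ a_split] := z_at a (mem_head _ _).
set e := (k + c.+1)%N; set L := (q ^ c.+1 - 1)%N.
have e_N : e \in N by apply: conductor; rewrite /e; lia.
have L_gt0 : (0 < L)%N.
  by rewrite /L subn_gt0 -[1%N](expn0 q) ltn_exp2l.
have a_eq : a = r ^+ e + L%:R * r ^+ e.
  rewrite def_a -[X in X + _]mul1r -mulrDl addrC natr1.
  have -> : L.+1 = (q ^ c.+1)%N by rewrite /L subn1 prednK // expn_gt0 ltnW.
  by rewrite /e exprD mulrCA natrX -exprMn qr1 expr1n mulr1.
have [] := a_split _ _ _ _ a_eq.
- by exists [:: e]; rewrite big_seq1 /= e_N.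
- exists (nseq L e); split; first by apply/allP => u /nseqP[-> _].
  by rewrite big_nseq iter_addr_0 mulr_natl.
- by move/eqP; rewrite gt_eqF ?exprn_gt0.
- by move/eqP; rewrite mulf_eq0 pnatr_eq0 (gtn_eqF L_gt0) gt_eqF ?exprn_gt0.
Qed.

Lemma rat_coprime_fraction (r : rat) : 0 < r ->
  exists p q : nat, [/\ (0 < p)%N, (0 < q)%N, coprime p q & r = p%:R / q%:R].
Proof.
move=> r_gt0; exists `|numq r|%N, `|denq r|%N; split.
- by rewrite absz_gt0 numq_eq0 gt_eqF.
- by rewrite absz_gt0 denq_eq0.
- exact: coprime_num_den.
have num_nat : numq r = `|numq r|%N by rewrite gtz0_abs // numq_gt0.
have den_nat : denq r = `|denq r|%N by rewrite gtz0_abs // denq_gt0.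
by rewrite -[r in LHS]divq_num_den num_nat den_nat.
Qed.

Theorem mainTheorem16 (r : rat) (N : pred nat) :
  0 < r -> numerical_monoid N -> atomic (exp_puiseux r N) ->
  ((exists n : nat, r = n%:R) <-> locally_tame (exp_puiseux r N)) /\
  (locally_tame (exp_puiseux r N) <-> globally_tame (exp_puiseux r N)).
Proof.
move=> r_gt0 numN atomicS.
have global_local : globally_tame (exp_puiseux r N) -> locally_tame (exp_puiseux r N).
  by case=> n tame a /tame; exists n.
have int_global : (exists n : nat, r = n%:R) -> globally_tame (exp_puiseux r N).
  by case=> n ->; apply: int_globally_tame; case: numN.
have local_int : locally_tame (exp_puiseux r N) -> exists n : nat, r = n%:R.
  move=> local; have [p [q [p_gt0 q_gt0 cop_pq def_r]]] := rat_coprime_fraction r_gt0.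
  case: (ltngtP q 1) => [q_lt1|q_gt1|q1]; first by rewrite ltnNge q_gt0 in q_lt1.
    exfalso; case: (ltngtP p 1) => [p_lt1|p_gt1|p1]; first by rewrite ltnNge p_gt0 in p_lt1.
      by move: local; rewrite def_r; apply: fractional_not_locally_tame.
    apply: unit_fraction_not_atomic q_gt1 _ numN atomicS.
    by rewrite def_r p1 mulrC divfK // pnatr_eq0 gtn_eqF.
  by exists p; rewrite def_r q1 divr1.
split; split.
- by move/int_global/global_local.
- exact: local_int.
- by move/local_int/int_global.
- exact: global_local.
Qed.
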